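(* Let $X$ be a set and $\{d_r\colon X\times X\to\mathbb{R}_{\ge0}\cup\{\infty\}\}_{r>0}$ a family satisfying the weaker $\{d_r\}$-axioms (see context). For $r,\varepsilon>0$ set $U_r^\varepsilon=\{(x,y)\in X\times X\mid d_r(x,y)<\varepsilon\}$, and call $U\subset X\times X$ an entourage if $U_r^\varepsilon\subset U$ for some $r>0,\varepsilon>0$. Then the collection $\mathcal U$ of all entourages is a quasi-uniformity on $X$. Moreover, if $d_r(x,y)=d_r(y,x)$ for all $x,y\in X$ and $r>0$, then $\mathcal U$ is a uniformity.
   Context: The weaker $\{d_r\}$-axioms, required for all $x,y,z\in X$: (Self-distance) $d_r(x,x)=0$ for all $r>0$. (Upper semi-continuity) if $r_1\le r_2$ then $d_{r_1}(x,y)\le d_{r_2}(x,y)$; and if $d_r(x,y)<\varepsilon$ there is $\delta>0$ with $d_{r+\delta}(x,y)<\varepsilon$. (Weaker triangle inequality) for $r_1,r_2,r_3>0$, if $d_{r_1+r_2+r_3}(x,y)<r_3$ and $d_{r_1+r_2+r_3}(y,z)<r_2$, then $d_{r_1}(x,z)\le d_{r_1+r_2+r_3}(x,y)+d_{r_1+r_2+r_3}(y,z)$. A quasi-uniformity on $X$ is a collection $\mathcal U$ of subsets of $X\times X$ such that: supersets of members are members; it is closed under finite intersections; every member contains the diagonal; for each $U\in\mathcal U$ there is $V\in\mathcal U$ with $V\circ V\subset U$, where $U\circ V=\{(x,z)\mid \exists y,\ (x,y)\in U,(y,z)\in V\}$. It is a uniformity if additionally $U\in\mathcal U$ implies $U^{-1}=\{(y,x)\mid(x,y)\in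 U\}\in\mathcal U$. *)

From Stdlib Require Import Reals.
From Coquelicot Require Import Rbar.
Open Scope R_scope.

(* A family {d_r}_{r>0} of maps X*X -> [0, +oo]; d r is only meaningful for r > 0. *)
Definition dfamily (X : Type) := R -> X -> X -> Rbar.

Definition nonneg_family {X : Type} (d : dfamily X) : Prop :=
  forall r, 0 < r -> forall x y, Rbar_le (Finite 0) (d r x y).

Definition weaker_dr_axioms {X : Type} (d : dfamily X) : Prop :=
  (forall r, 0 < r -> forall x, d r x x = Finite 0) /\
  (forall r1 r2, 0 < r1 -> r1 <= r2 -> forall x y, Rbar_le (d r1 x y) (d r2 x y)) /\
  (forall r eps, 0 < r -> forall x y, Rbar_lt (d r x y) (Finite eps) ->
     exists delta, 0 < delta /\ Rbar_lt (d (r + delta) x y) (Finite eps)) /\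
  (forall r1 r2 r3, 0 < r1 -> 0 < r2 -> 0 < r3 -> forall x y z,
     Rbar_lt (d (r1 + r2 + r3) x y) (Finite r3) ->
     Rbar_lt (d (r1 + r2 + r3) y z) (Finite r2) ->
     Rbar_le (d r1 x z) (Rbar_plus (d (r1 + r2 + r3) x y) (d (r1 + r2 + r3) y z))).

Definition rel (X : Type) := X -> X -> Prop.

Definition rel_sub {X : Type} (U V : rel X) : Prop := forall x y, U x y -> V x y.
Definition rel_inter {X : Type} (U V : rel X) : rel X := fun x y => U x y /\ V x y.
Definition rel_comp {X : Type} (U V : rel X) : rel X :=
  fun x z => exists y, U x y /\ V y z.
Definition rel_inv {X : Type} (U : rel X) : rel X := fun x y => U y x.

Definition is_quasi_uniformity {X : Type} (UU : rel X -> Prop) : Prop :=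
  (forall U V, UU U -> rel_sub U V -> UU V) /\
  (forall U V, UU U -> UU V -> UU (rel_inter U V)) /\
  (forall U, UU U -> forall x, U x x) /\
  (forall U, UU U -> exists V, UU V /\ rel_sub (rel_comp V V) U).

Definition is_uniformity {X : Type} (UU : rel X -> Prop) : Prop :=
  is_quasi_uniformity UU /\ (forall U, UU U -> UU (rel_inv U)).

Definition Ure {X : Type} (d : dfamily X) (r eps : R) : rel X :=
  fun x y => Rbar_lt (d r x y) (Finite eps).

Definition entourage {X : Type} (d : dfamily X) (U : rel X) : Prop :=
  exists r eps, 0 < r /\ 0 < eps /\ rel_sub (Ure d r eps) U.

(* Every entourage contains some U_r^eps, and these basic sets are directed:
   U_{max r1 r2}^{min e1 e2} lies in both U_r1^e1 and U_r2^e2 by monotonicity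
   in r.  The weaker triangle inequality with r2 = r3 = eps/2 gives
   U_{r+eps}^{eps/2} o U_{r+eps}^{eps/2} within U_r^eps, which is the
   composition axiom.  Under symmetry every U_r^eps is its own inverse. *)
From Stdlib Require Import Reals Lra.
From Coquelicot Require Import Rbar.
Open Scope R_scope.

Section Entourages.

Variables (X : Type) (d : dfamily X).

Hypothesis self_distance : forall r, 0 < r -> forall x, d r x x = Finite 0.

Hypothesis monotone : forall r1 r2, 0 < r1 -> r1 <= r2 ->
  forall x y, Rbar_le (d r1 x y) (d r2 x y).

Hypothesis weak_triangle : forall r1 r2 r3, 0 < r1 -> 0 < r2 -> 0 < r3 ->
  forall x y z,
  Rbar_lt (d (r1 + r2 + r3) x y) (Finite r3) ->
  Rbar_lt (d (r1 + r2 + r3) y z) (Finite r2) ->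
  Rbar_le (d r1 x z) (Rbar_plus (d (r1 + r2 + r3) x y) (d (r1 + r2 + r3) y z)).

Lemma Ure_refl r eps : 0 < r -> 0 < eps -> forall x, Ure d r eps x x.
Proof. intros Hr Heps x; unfold Ure; now rewrite self_distance. Qed.

Lemma Ure_monotone r1 r2 e1 e2 :
  0 < r1 -> r1 <= r2 -> e2 <= e1 -> rel_sub (Ure d r2 e2) (Ure d r1 e1).
Proof.
  intros Hr1 Hr12 He x y H; unfold Ure in *.
  apply Rbar_le_lt_trans with (d r2 x y); [now apply monotone|].
  now apply Rbar_lt_le_trans with (1 := H).
Qed.

Lemma Ure_comp r s : 0 < r -> 0 < s ->
  rel_sub (rel_comp (Ure d (r + s + s) s) (Ure d (r + s + s) s)) (Ure d r (s + s)).
Proof.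
  intros Hr Hs x z [y [Hxy Hyz]]; unfold Ure in *.
  apply Rbar_le_lt_trans with (1 := weak_triangle r s s Hr Hs Hs x y z Hxy Hyz).
  exact (Rbar_plus_lt_compat _ (Finite s) _ (Finite s) Hxy Hyz).
Qed.

Lemma Ure_inv r eps : (forall x y, d r x y = d r y x) ->
  rel_sub (Ure d r eps) (rel_inv (Ure d r eps)).
Proof. intros Hsym x y; unfold Ure, rel_inv; now rewrite Hsym. Qed.

Lemma entourage_superset U V : entourage d U -> rel_sub U V -> entourage d V.
Proof.
  intros [r [e [Hr [He HU]]]] HUV.
  exists r, e; repeat split; auto.
  intros x y H; exact (HUV x y (HU x y H)).
Qed.

Lemma entourage_inter U V :
  entourage d U -> entourage d V -> entourage d (rel_inter U V).
Proof.
  intros [r1 [e1 [Hr1 [He1 HU]]]] [r2 [e2 [Hr2 [He2 HV]]]].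
  exists (Rmax r1 r2), (Rmin e1 e2).
  split; [apply Rmax_case; lra|]; split; [apply Rmin_case; lra|].
  intros x y H; split.
  - apply HU, (Ure_monotone _ _ _ _ Hr1 (Rmax_l r1 r2) (Rmin_l e1 e2)), H.
  - apply HV, (Ure_monotone _ _ _ _ Hr2 (Rmax_r r1 r2) (Rmin_r e1 e2)), H.
Qed.

Lemma entourage_refl U : entourage d U -> forall x, U x x.
Proof. intros [r [e [Hr [He HU]]]] x; now apply HU, Ure_refl. Qed.

Lemma entourage_comp U : entourage d U ->
  exists V, entourage d V /\ rel_sub (rel_comp V V) U.
Proof.
  intros [r [e [Hr [He HU]]]].
  set (s := e / 2).
  assert (Hs : 0 < s) by (unfold s; lra).
  exists (Ure d (r + s + s) s); split.
  - exists (r + s + s), s; repeat split; try lra.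
    now intros x y H.
  - intros x z Hxz; apply HU.
    replace e with (s + s) by (unfold s; field).
    now apply Ure_comp.
Qed.

Lemma entourage_quasi_uniformity : is_quasi_uniformity (entourage d).
Proof.
  repeat split.
  - exact entourage_superset.
  - exact entourage_inter.
  - exact entourage_refl.
  - exact entourage_comp.
Qed.

Lemma entourage_inv : (forall r, 0 < r -> forall x y, d r x y = d r y x) ->
  forall U, entourage d U -> entourage d (rel_inv U).
Proof.
  intros Hsym U [r [e [Hr [He HU]]]].
  exists r, e; repeat split; auto.
  intros x y H; apply HU, (Ure_inv r e (Hsym r Hr)), H.
Qed.

End Entourages.

Theorem proposition4p6 (X : Type) (d : dfamily X) :
  nonneg_family d -> weaker_dr_axioms d ->
  is_quasi_uniformity (entourage d) /\
  ((forall r, 0 < r -> forall x y, d r x y = d r y x) -> is_uniformity (entourage d)).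
Proof.
  intros _ [Hself [Hmono [_ Htri]]].
  pose proof (entourage_quasi_uniformity X d Hself Hmono Htri) as Hquasi.
  split; [exact Hquasi|].
  intros Hsym; split; [exact Hquasi|].
  exact (entourage_inv X d Hsym).
Qed.
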